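(* Let $p\ge1$ and $n\ge p$ be integers, and let $\Lambda\in\mathbb R$. The real vector space of even functions $z\in C^{2n}[-1,1]$ satisfying - $L^{2n}(\Lambda)z=0$ on $[-1,1]$, and - $z^{(j)}(\pm1)=0$ for $j=0,\dots,n-1$, has dimension at most $1$. Equivalently, two linearly independent even eigenfunctions of order $n$ have different eigenvalues.
   Context: Fix an integer $p\ge1$. For an integer $k\ge p$ and real $\Lambda$, the differential operator on $[-1,1]$ is $$L^{2k}(\Lambda)=(-1)^k\frac{d^{2k}}{dx^{2k}}-\Lambda(-1)^{k-p}\frac{d^{2k-2p}}{dx^{2k-2p}}.$$ An eigenfunction of order $k$ with eigenvalue $\Lambda$ is a nonzero real $z\in C^{2k}[-1,1]$ such that: - $L^{2k}(\Lambda)z=0$ on $[-1,1]$, and - $z^{(j)}(\pm1)=0$ for $j<k$. *)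

From Stdlib Require Import Reals Lra Lia.
Open Scope R_scope.

Definition inI (x : R) : Prop := -1 <= x <= 1.

Definition deriv_on_I (f f' : R -> R) : Prop :=
  forall x, inI x ->
    forall eps, 0 < eps -> exists delta, 0 < delta /\
      forall h, h <> 0 -> Rabs h < delta -> inI (x + h) ->
        Rabs ((f (x + h) - f x) / h - f' x) < eps.

Definition cont_on_I (f : R -> R) : Prop :=
  forall x, inI x ->
    forall eps, 0 < eps -> exists delta, 0 < delta /\
      forall y, inI y -> Rabs (y - x) < delta -> Rabs (f y - f x) < eps.

(* d is a sequence of successive derivatives of z of orders 0..m on [-1,1],
   with the m-th derivative continuous: this witnesses z ∈ C^m[-1,1]. *)
Definition derivs_on_I (m : nat) (z : R -> R) (d : nat -> R -> R) : Prop :=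
  (forall x, inI x -> d 0%nat x = z x) /\
  (forall j, (j < m)%nat -> deriv_on_I (d j) (d (S j))) /\
  cont_on_I (d m).

Definition even_eigen_sol (p n : nat) (Lam : R) (z : R -> R) : Prop :=
  (forall x, inI x -> z (- x) = z x) /\
  exists d : nat -> R -> R,
    derivs_on_I (2 * n) z d /\
    (forall x, inI x ->
       (-1) ^ n * d (2 * n)%nat x
       - Lam * (-1) ^ (n - p) * d (2 * n - 2 * p)%nat x = 0) /\
    (forall j, (j < n)%nat -> d j 1 = 0 /\ d j (-1) = 0).

(* Choose a, b with a z1^(n)(1) + b z2^(n)(1) = 0.  Even functions satisfy
   z^(n)(-1) = (-1)^n z^(n)(1), so w = a z1 + b z2 solves the equation with
   w^(j)(±1) = 0 for all j <= n, one boundary condition more than required.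
   Such a w vanishes: pairing the equation with the Rellich multiplier
   y w' + (1/2 - (n - p)) w and integrating by parts produces an energy B with
   B(±1) = 0 and B' = -p (w^(n))^2 <= 0, so B = 0, hence w^(n) = 0, and the
   boundary conditions at 1 give w = 0. *)

From Stdlib Require Import Reals Lra Lia.
Open Scope R_scope.

Lemma D_in_of_deriv_on_I f f' : deriv_on_I f f' -> forall x, inI x -> D_in f f' inI x.
Proof.
  intros H x Hx eps He.
  destruct (H x Hx eps He) as [del [Hdel Hh]].
  exists del; split; [lra|].
  intros y [[Hy Hyx] Hdist]; simpl in *; unfold R_dist in *.
  specialize (Hh (y - x)); replace (x + (y - x)) with y in Hh by ring.
  apply Hh; auto; lra.
Qed.

Lemma inI_approx x r : inI x -> 0 < r -> exists y, inI y /\ y <> x /\ Rabs (y - x) < r.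
Proof.
  intros Hx Hr; unfold inI in *.
  pose proof (Rmin_l r 1); pose proof (Rmin_r r 1).
  assert (Ht : 0 < Rmin r 1) by (apply Rmin_pos; lra).
  destruct (Rle_dec x 0).
  - exists (x + Rmin r 1 / 2).
    replace (x + Rmin r 1 / 2 - x) with (Rmin r 1 / 2) by ring.
    rewrite Rabs_right; lra.
  - exists (x - Rmin r 1 / 2).
    replace (x - Rmin r 1 / 2 - x) with (- (Rmin r 1 / 2)) by ring.
    rewrite Rabs_Ropp, Rabs_right; lra.
Qed.

Lemma D_in_inI_unique f g f' g' x : inI x -> (forall y, inI y -> f y = g y) ->
  D_in f f' inI x -> D_in g g' inI x -> f' x = g' x.
Proof.
  intros Hx Hfg Hf Hg; apply cond_eq; intros eps He.
  destruct (Hf (eps / 2) ltac:(lra)) as [a1 [Ha1 H1]].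
  destruct (Hg (eps / 2) ltac:(lra)) as [a2 [Ha2 H2]].
  pose proof (Rmin_l a1 a2); pose proof (Rmin_r a1 a2).
  destruct (inI_approx x (Rmin a1 a2) Hx) as [y [Hy [Hyx Hdist]]].
  { apply Rmin_pos; lra. }
  assert (Hy1 : D_x inI x y /\ R_dist y x < a1) by (split; [split|unfold R_dist]; auto; lra).
  assert (Hy2 : D_x inI x y /\ R_dist y x < a2) by (split; [split|unfold R_dist]; auto; lra).
  specialize (H1 y Hy1); specialize (H2 y Hy2); simpl in *; unfold R_dist in *.
  rewrite (Hfg y Hy), (Hfg x Hx) in H1.
  apply Rabs_def2 in H1; apply Rabs_def2 in H2; apply Rabs_def1; lra.
Qed.

Lemma D_in_inI_continuous f f' x : D_in f f' inI x -> forall eps, 0 < eps ->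
  exists del, 0 < del /\ forall y, inI y -> Rabs (y - x) < del -> Rabs (f y - f x) < eps.
Proof.
  intros H eps He.
  destruct (cont_deriv _ _ _ _ H eps He) as [del [Hdel Hf]].
  exists del; split; [lra|]; intros y Hy Hyx.
  destruct (Req_dec y x) as [->|Hne].
  - rewrite Rminus_diag, Rabs_R0; lra.
  - exact (Hf y (conj (conj Hy (not_eq_sym Hne)) Hyx)).
Qed.

Lemma D_in_inI_derivable_pt_lim f f' x : D_in f f' inI x -> -1 < x < 1 ->
  derivable_pt_lim f x (f' x).
Proof.
  intros H Hx eps He; destruct (H eps He) as [alp [Halp Hf]].
  assert (Hm : 0 < Rmin alp (Rmin (1 - x) (x + 1))).
  { apply Rmin_pos; [lra|apply Rmin_pos; lra]. }
  exists (mkposreal _ Hm); intros h Hh0 Hh; simpl in Hh.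
  pose proof (Rmin_l alp (Rmin (1 - x) (x + 1))).
  pose proof (Rmin_r alp (Rmin (1 - x) (x + 1))).
  pose proof (Rmin_l (1 - x) (x + 1)); pose proof (Rmin_r (1 - x) (x + 1)).
  apply Rabs_def2 in Hh.
  specialize (Hf (x + h)); simpl in Hf; unfold R_dist in Hf.
  replace (x + h - x) with h in Hf by ring.
  apply Hf; split; [split|].
  - unfold inI; lra.
  - lra.
  - apply Rabs_def1; lra.
Qed.

Section Monotonicity.

Variables f f' : R -> R.
Hypothesis f_deriv : forall x, inI x -> D_in f f' inI x.
Hypothesis f'_nonpos : forall x, inI x -> f' x <= 0.

Lemma nonincreasing_interior a b : -1 < a -> a < b -> b < 1 -> f b <= f a.
Proof.
  intros Ha Hab Hb.
  destruct (MVT_cor2 f f' a b Hab) as [c [Hc Hcab]].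
  { intros c Hc; apply D_in_inI_derivable_pt_lim; [apply f_deriv; unfold inI|]; lra. }
  assert (f' c <= 0) by (apply f'_nonpos; unfold inI; lra).
  nra.
Qed.

(* Approach both endpoints from the interior and pass to the limit by continuity. *)
Lemma nonincreasing_of_deriv_nonpos x y : inI x -> inI y -> x <= y -> f y <= f x.
Proof.
  intros Hx Hy Hxy.
  destruct (Req_dec x y) as [->|Hne]; [lra|].
  destruct (Rle_lt_dec (f y) (f x)) as [|Hlt]; [assumption|exfalso].
  set (eps := (f y - f x) / 3).
  destruct (D_in_inI_continuous f f' x (f_deriv x Hx) eps ltac:(unfold eps; lra))
    as [d1 [Hd1 H1]].
  destruct (D_in_inI_continuous f f' y (f_deriv y Hy) eps ltac:(unfold eps; lra))
    as [d2 [Hd2 H2]].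
  set (t := Rmin (Rmin d1 d2) ((y - x) / 2) / 2).
  assert (0 < Rmin (Rmin d1 d2) ((y - x) / 2)) by (apply Rmin_pos; [apply Rmin_pos|]; lra).
  pose proof (Rmin_l (Rmin d1 d2) ((y - x) / 2)).
  pose proof (Rmin_r (Rmin d1 d2) ((y - x) / 2)).
  pose proof (Rmin_l d1 d2); pose proof (Rmin_r d1 d2).
  unfold inI in *.
  assert (Hin : f (y - t) <= f (x + t)) by (apply nonincreasing_interior; unfold t; lra).
  assert (A1 : Rabs (f (x + t) - f x) < eps).
  { apply H1; [unfold t; lra|]; replace (x + t - x) with t by ring.
    rewrite Rabs_right; unfold t; lra. }
  assert (A2 : Rabs (f (y - t) - f y) < eps).
  { apply H2; [unfold t; lra|]; replace (y - t - y) with (- t) by ring.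
    rewrite Rabs_Ropp, Rabs_right; unfold t; lra. }
  apply Rabs_def2 in A1; apply Rabs_def2 in A2; unfold eps in *; lra.
Qed.

End Monotonicity.

Lemma zero_of_deriv_zero f f' : (forall x, inI x -> D_in f f' inI x) ->
  (forall x, inI x -> f' x = 0) -> f 1 = 0 -> forall x, inI x -> f x = 0.
Proof.
  intros Hf Hf' H1 x Hx.
  assert (I1 : inI 1) by (unfold inI; lra).
  assert (x <= 1) by (unfold inI in Hx; lra).
  assert (f 1 <= f x).
  { apply (nonincreasing_of_deriv_nonpos f f'); auto.
    intros; rewrite Hf'; auto; lra. }
  assert (- f 1 <= - f x).
  { apply (nonincreasing_of_deriv_nonpos (fun y => - f y) (fun y => - f' y)); auto.
    - intros; apply Dopp; auto.
    - intros; rewrite Hf'; auto; lra. }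
  lra.
Qed.

Fixpoint psum (F : nat -> R) (k : nat) : R :=
  match k with O => 0 | S k' => psum F k' + F k' end.

Lemma psum_ext F G k : (forall i, (i < k)%nat -> F i = G i) -> psum F k = psum G k.
Proof.
  induction k as [|k IH]; simpl; intros H; [reflexivity|].
  rewrite IH, H; auto; intros; apply H; lia.
Qed.

Lemma psum_telescope (a : nat -> R) k : psum (fun i => a i - a (S i)) k = a 0%nat - a k.
Proof. induction k as [|k IH]; simpl; [|rewrite IH]; ring. Qed.

Lemma psum_zero k : psum (fun _ => 0) k = 0.
Proof. induction k as [|k IH]; simpl; [|rewrite IH]; ring. Qed.

Lemma D_in_psum (F F' : nat -> R -> R) k D x :
  (forall i, (i < k)%nat -> D_in (F i) (F' i) D x) ->
  D_in (fun y => psum (fun i => F i y) k) (fun y => psum (fun i => F' i y) k) D x.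
Proof.
  induction k as [|k IH]; simpl; intros H.
  - apply Dconst.
  - apply Dadd; [apply IH; intros|]; apply H; lia.
Qed.

Lemma pow_m1_sqr n : (-1) ^ n * (-1) ^ n = 1.
Proof. rewrite <- pow_add; replace (n + n)%nat with (2 * n)%nat by lia; apply pow_1_even. Qed.

Section RellichForm.

Variables (f : nat -> R -> R) (c : R).

(* For a derivative chain f of z, [multiplier_deriv i] is the i-th derivative
   of the multiplier y z' + c z. *)
Definition multiplier_deriv (i : nat) (y : R) : R :=
  y * f (S i) y + (INR i + c) * f i y.

Definition rellich_form (k : nat) (y : R) : R :=
  psum (fun i => (-1) ^ i * f (2 * k - 1 - i)%nat y * multiplier_deriv i y) k
  + (-1) ^ k / 2 * (y * (f k y * f k y)).

Lemma D_in_multiplier_deriv i x :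
  D_in (f i) (f (S i)) inI x -> D_in (f (S i)) (f (S (S i))) inI x ->
  D_in (multiplier_deriv i) (multiplier_deriv (S i)) inI x.
Proof.
  intros H1 H2; unfold multiplier_deriv; eapply D_in_ext.
  2: apply Dadd; [apply Dmult; [apply Dx|exact H2]|apply Dmult_const; exact H1].
  cbv beta; rewrite S_INR; ring.
Qed.

(* Integrating [f (2k) * multiplier] by parts k times: the boundary terms
   telescope and leave a multiple of [f k ^ 2]. *)
Lemma D_in_rellich_form k x :
  (forall j, (j < 2 * k)%nat -> D_in (f j) (f (S j)) inI x) ->
  D_in (f k) (f (S k)) inI x ->
  D_in (rellich_form k)
    (fun y => f (2 * k)%nat y * multiplier_deriv 0 y
              - (-1) ^ k * (INR k + c - / 2) * (f k y * f k y)) inI x.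
Proof.
  intros Hf Hk; unfold rellich_form; eapply D_in_ext; swap 1 2.
  - apply Dadd.
    + apply D_in_psum; intros i Hi.
      apply Dmult; [apply Dmult_const, Hf; lia|].
      apply D_in_multiplier_deriv; [apply Hf; lia|].
      destruct (Nat.eq_dec (S i) k) as [<-|]; [exact Hk|apply Hf; lia].
    + apply Dmult_const, Dmult; [apply Dx|apply Dmult; exact Hk].
  - cbv beta.
    set (a := fun i => (-1) ^ i * f (2 * k - i)%nat x * multiplier_deriv i x).
    rewrite (psum_ext _ (fun i => a i - a (S i))).
    + rewrite psum_telescope; unfold a; rewrite Nat.sub_0_r.
      replace (2 * k - k)%nat with k by lia.
      unfold multiplier_deriv; simpl pow; field.
    + intros i Hi; unfold a.
      replace (S (2 * k - 1 - i)) with (2 * k - i)%nat by lia.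
      replace (2 * k - S i)%nat with (2 * k - 1 - i)%nat by lia.
      simpl pow; ring.
Qed.

Lemma rellich_form_eq0 k y : (forall j, (j <= k)%nat -> f j y = 0) -> rellich_form k y = 0.
Proof.
  intros H; unfold rellich_form; rewrite (psum_ext _ (fun _ => 0)).
  - rewrite psum_zero, (H k) by lia; ring.
  - intros i Hi; unfold multiplier_deriv; rewrite (H i), (H (S i)) by lia; ring.
Qed.

End RellichForm.

Lemma chain_zero_of_top_zero (d : nat -> R -> R) k :
  (forall j x, (j < k)%nat -> inI x -> D_in (d j) (d (S j)) inI x) ->
  (forall j, (j < k)%nat -> d j 1 = 0) ->
  (forall x, inI x -> d k x = 0) ->
  forall x, inI x -> d 0%nat x = 0.
Proof.
  revert d; induction k as [|k IH]; intros d Hd H1 Htop; [exact Htop|].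
  apply (zero_of_deriv_zero _ (d 1%nat)).
  - intros x Hx; apply Hd; auto; lia.
  - apply (IH (fun j => d (S j))); auto.
    + intros j x Hj Hx; apply Hd; auto; lia.
    + intros j Hj; apply H1; lia.
  - apply H1; lia.
Qed.

Section EigenChain.

Variables (p n : nat) (Lam : R).

Definition eigen_chain (d : nat -> R -> R) : Prop :=
  (forall j x, (j < 2 * n)%nat -> inI x -> D_in (d j) (d (S j)) inI x) /\
  (forall x, inI x ->
     (-1) ^ n * d (2 * n)%nat x - Lam * (-1) ^ (n - p) * d (2 * n - 2 * p)%nat x = 0) /\
  (forall j, (j < n)%nat -> d j 1 = 0 /\ d j (-1) = 0).

Lemma eigen_chain_lincomb a b d1 d2 : eigen_chain d1 -> eigen_chain d2 ->
  eigen_chain (fun j y => a * d1 j y + b * d2 j y).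
Proof.
  intros [D1 [E1 B1]] [D2 [E2 B2]]; split; [|split].
  - intros j x Hj Hx; apply Dadd; apply Dmult_const; auto.
  - intros x Hx; cbv beta.
    transitivity (a * ((-1) ^ n * d1 (2 * n)%nat x - Lam * (-1) ^ (n - p) * d1 (2 * n - 2 * p)%nat x)
                  + b * ((-1) ^ n * d2 (2 * n)%nat x - Lam * (-1) ^ (n - p) * d2 (2 * n - 2 * p)%nat x));
      [ring|rewrite E1, E2 by auto; ring].
  - intros j Hj; destruct (B1 j Hj) as [-> ->], (B2 j Hj) as [-> ->]; split; ring.
Qed.

Definition eigen_energy (d : nat -> R -> R) (y : R) : R :=
  let c := / 2 - INR (n - p) in
  (-1) ^ n * rellich_form d c n y - Lam * (-1) ^ (n - p) * rellich_form d c (n - p) y.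

(* The constant [c] kills the [f (n-p) ^ 2] term of the lower Rellich form,
   and the eigen equation kills the multiplier terms. *)
Lemma D_in_eigen_energy d x : (1 <= p)%nat -> (p <= n)%nat -> eigen_chain d -> inI x ->
  D_in (eigen_energy d) (fun y => - INR p * (d n y * d n y)) inI x.
Proof.
  intros Hp Hpn [Hd [He _]] Hx; set (m := (n - p)%nat).
  unfold eigen_energy; fold m; eapply D_in_ext; swap 1 2.
  - apply Dminus; apply Dmult_const; apply D_in_rellich_form; intros;
      apply Hd; auto; unfold m in *; lia.
  - cbv beta; specialize (He x Hx).
    replace (2 * n - 2 * p)%nat with (2 * m)%nat in He by (unfold m; lia).
    fold m in He.
    assert (Hn : INR n = INR m + INR p) by (rewrite <- plus_INR; f_equal; unfold m; lia).
    rewrite Hn.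
    transitivity (multiplier_deriv d (/ 2 - INR m) 0 x
                    * ((-1) ^ n * d (2 * n)%nat x - Lam * (-1) ^ m * d (2 * m)%nat x)
                  - ((-1) ^ n * (-1) ^ n) * INR p * (d n x * d n x)); [ring|].
    rewrite He, pow_m1_sqr; ring.
Qed.

Lemma eigen_chain_zero d : (1 <= p)%nat -> (p <= n)%nat -> eigen_chain d ->
  d n 1 = 0 -> d n (-1) = 0 -> forall x, inI x -> d 0%nat x = 0.
Proof.
  intros Hp Hpn Hd Hn1 Hnm1.
  pose proof Hd as [Hder [_ Hbd]].
  assert (I1 : inI 1) by (unfold inI; lra).
  assert (Im1 : inI (-1)) by (unfold inI; lra).
  assert (Hbd' : forall j, (j <= n)%nat -> d j 1 = 0 /\ d j (-1) = 0).
  { intros j Hj; destruct (Nat.eq_dec j n) as [->|]; auto; apply Hbd; lia. }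
  assert (Hends : forall s, s = 1 \/ s = -1 -> eigen_energy d s = 0).
  { intros s Hs; unfold eigen_energy; rewrite !rellich_form_eq0; [ring| |];
      intros j Hj; destruct Hs as [-> | ->]; apply Hbd'; lia. }
  assert (Hmono : forall x y, inI x -> inI y -> x <= y -> eigen_energy d y <= eigen_energy d x).
  { apply nonincreasing_of_deriv_nonpos with (fun y => - INR p * (d n y * d n y)).
    - intros; apply D_in_eigen_energy; auto.
    - intros; pose proof (pos_INR p); nra. }
  assert (Hzero : forall y, inI y -> eigen_energy d y = 0).
  { intros y Hy; pose proof Hy as [Hy1 Hy2].
    pose proof (Hmono y 1 Hy I1 Hy2); pose proof (Hmono (-1) y Im1 Hy Hy1).
    rewrite (Hends 1), (Hends (-1)) in * by auto; lra. }
  apply (chain_zero_of_top_zero d n).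
  - intros; apply Hder; auto; lia.
  - intros j Hj; apply Hbd; lia.
  - intros x Hx.
    assert (Hsq : - INR p * (d n x * d n x) = 0).
    { apply (D_in_inI_unique (eigen_energy d) (fun _ => 0)
               (fun y => - INR p * (d n y * d n y)) (fun _ => 0) x Hx).
      - exact Hzero.
      - apply D_in_eigen_energy; auto.
      - apply Dconst. }
    assert (0 < INR p) by (apply lt_0_INR; lia).
    apply Rmult_integral in Hsq as [|Hsq]; [lra|].
    apply Rmult_integral in Hsq as [|]; assumption.
Qed.

End EigenChain.

Lemma deriv_on_I_reflect f f' : deriv_on_I f f' ->
  deriv_on_I (fun x => f (- x)) (fun x => - f' (- x)).
Proof.
  intros H x Hx eps He.
  destruct (H (- x) ltac:(unfold inI in *; lra) eps He) as [del [Hdel Hh]].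
  exists del; split; [assumption|]; intros h Hh0 Hhdel Hxh.
  replace (- (x + h)) with (- x + - h) by ring.
  replace ((f (- x + - h) - f (- x)) / h - - f' (- x))
    with (- ((f (- x + - h) - f (- x)) / - h - f' (- x))) by (field; assumption).
  rewrite Rabs_Ropp; apply Hh; [lra|rewrite Rabs_Ropp; assumption|unfold inI in *; lra].
Qed.

Lemma even_derivs_parity m z d : (forall x, inI x -> z (- x) = z x) ->
  derivs_on_I m z d ->
  forall j, (j <= m)%nat -> forall x, inI x -> d j (- x) = (-1) ^ j * d j x.
Proof.
  intros Hev [D0 [Dd _]]; induction j as [|j IH]; intros Hj x Hx.
  - assert (inI (- x)) by (unfold inI in *; lra).
    rewrite !D0, Hev by assumption; simpl; ring.
  - assert (Hrefl : d (S j) x = (-1) ^ j * - d (S j) (- x)).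
    { apply (D_in_inI_unique (d j) (fun y => (-1) ^ j * d j (- y))
               (d (S j)) (fun y => (-1) ^ j * - d (S j) (- y))); [assumption| | |].
      - intros y Hy; rewrite IH, <- Rmult_assoc, pow_m1_sqr by (auto; lia); ring.
      - apply D_in_of_deriv_on_I; auto; apply Dd; lia.
      - apply Dmult_const, D_in_of_deriv_on_I, Hx.
        apply deriv_on_I_reflect, Dd; lia. }
    rewrite Hrefl; simpl pow.
    transitivity (((-1) ^ j * (-1) ^ j) * d (S j) (- x)); [rewrite pow_m1_sqr|]; ring.
Qed.

Lemma even_eigen_sol_chain p n Lam z : even_eigen_sol p n Lam z ->
  exists d, eigen_chain p n Lam d /\ (forall x, inI x -> d 0%nat x = z x) /\
            d n (-1) = (-1) ^ n * d n 1.
Proof.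
  intros [Hev [d [Hd [He Hb]]]]; exists d.
  pose proof (even_derivs_parity _ _ _ Hev Hd n ltac:(lia) 1 ltac:(unfold inI; lra)) as Hpar.
  destruct Hd as [D0 [Dd _]].
  split; [|split; auto].
  split; [|split; assumption].
  intros j x Hj Hx; apply D_in_of_deriv_on_I; auto.
Qed.

Lemma exists_nontrivial_annihilator u v : exists a b, (a <> 0 \/ b <> 0) /\ a * u + b * v = 0.
Proof.
  destruct (Req_dec v 0) as [Hv|Hv].
  - exists 0, 1; split; [right|rewrite Hv]; lra.
  - exists v, (- u); split; [left|]; lra.
Qed.

Theorem mainTheorem7 (p n : nat) (Lam : R) (z1 z2 : R -> R) :
  (1 <= p)%nat -> (p <= n)%nat ->
  even_eigen_sol p n Lam z1 -> even_eigen_sol p n Lam z2 ->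
  exists a b : R, (a <> 0 \/ b <> 0) /\
    forall x, inI x -> a * z1 x + b * z2 x = 0.
Proof.
  intros Hp Hpn H1 H2.
  destruct (even_eigen_sol_chain _ _ _ _ H1) as [d1 [C1 [Z1 P1]]].
  destruct (even_eigen_sol_chain _ _ _ _ H2) as [d2 [C2 [Z2 P2]]].
  destruct (exists_nontrivial_annihilator (d1 n 1) (d2 n 1)) as [a [b [Hab Hn]]].
  exists a, b; split; [assumption|]; intros x Hx.
  rewrite <- Z1, <- Z2 by assumption.
  apply (eigen_chain_zero p n Lam (fun j y => a * d1 j y + b * d2 j y));
    auto using eigen_chain_lincomb.
  rewrite P1, P2; transitivity ((-1) ^ n * (a * d1 n 1 + b * d2 n 1)); [ring|].
  rewrite Hn; ring.
Qed.
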